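(* Let $k\ge 0$ and let $G$ be a graph that is $K_\ell$-free for some $\ell\le k+2$. Then $G$ is an interval graph if and only if $G$ is a bar $k$-visibility graph.
   Context: A bar $k$-visibility representation is a finite collection of pairwise disjoint closed horizontal line segments (bars) in the plane; two bars are joined by a line of sight if there is a vertical segment with endpoints on the two bars intersecting at most $k$ other bars. The bar $k$-visibility graph has one vertex per bar, two vertices adjacent iff their bars are joined by a line of sight. An interval graph here is the graph obtained from such a collection of bars where two bars are adjacent whenever some vertical segment joins them, regardless of how many bars it passes through. A graph is $K_\ell$-free if it contains no complete subgraph on $\ell$ vertices. *)

From HB Require Import structures.
From mathcomp Require Import all_boot all_order all_algebra.
From mathcomp Require Import Rstruct.
Set Implicit Arguments. Unset Strict Implicit. Unset Printing Implicit Defensive.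
Import Order.TTheory GRing.Theory Num.Theory.
Local Open Scope ring_scope.

Definition coord : realFieldType := Rdefinitions.R.

(* A bar representation indexed by the vertex type V: bar v is the closed
   horizontal segment [bl v, br v] x {by_ v}. *)
Record bars (V : finType) := Bars {
  by_ : V -> coord;
  bl : V -> coord;
  br : V -> coord }.

Definition bars_wf (V : finType) (B : bars V) : Prop :=
  (forall v, bl B v < br B v) /\
  (forall u v, u != v -> by_ B u = by_ B v ->
     br B u < bl B v \/ br B v < bl B u).

Definition on_bar (V : finType) (B : bars V) (v : V) (x : coord) : bool :=
  (bl B v <= x) && (x <= br B v).

(* Bars (other than u, v) met by the closed vertical segment at abscissa x
   joining bars u and v. *)
Definition blockers (V : finType) (B : bars V) (u v : V) (x : coord) : {set V} :=
  [set w | [&& w != u, w != v, on_bar B w x,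
             Num.min (by_ B u) (by_ B v) <= by_ B w
           & by_ B w <= Num.max (by_ B u) (by_ B v)]].

Definition k_sees (k : nat) (V : finType) (B : bars V) (u v : V) : Prop :=
  u != v /\ exists x, [/\ on_bar B u x, on_bar B v x & (#|blockers B u v x| <= k)%N].

Definition int_adj (V : finType) (B : bars V) (u v : V) : Prop :=
  u != v /\ exists x, on_bar B u x /\ on_bar B v x.

Definition simple_graph (V : finType) (e : rel V) : Prop :=
  symmetric e /\ irreflexive e.

Definition is_bar_k_visibility_graph (k : nat) (V : finType) (e : rel V) : Prop :=
  exists B : bars V, bars_wf B /\ forall u v, e u v <-> k_sees k B u v.

Definition is_interval_graph (V : finType) (e : rel V) : Prop :=
  exists B : bars V, bars_wf B /\ forall u v, e u v <-> int_adj B u v.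

Definition K_free (l : nat) (V : finType) (e : rel V) : Prop :=
  ~ exists S : {set V}, #|S| = l /\
      {in S &, forall u v, u != v -> e u v}.

(** Take the same bars for both graphs.  A line of sight at abscissa x between
  bars u and v crosses a "stack" of bars, all of which contain x, so the stack
  is a clique of the interval graph; the bars of a stack are totally ordered by
  height, and any two among its l lowest bars see each other through at most
  l - 2 <= k bars, so those form a clique of the bar k-visibility graph.  A
  K_l-free graph therefore only has stacks of fewer than l <= k + 2 bars, so
  every vertical segment joining two bars crosses at most k others: interval
  adjacency and k-visibility coincide. *)

From Pilot Require Import Defs.
From mathcomp Require Import all_boot all_order all_algebra.
From mathcomp Require Import lra zify.
Set Implicit Arguments. Unset Strict Implicit. Unset Printing Implicit Defensive.
Import Order.TTheory GRing.Theory Num.Theory.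
Local Open Scope ring_scope.

Lemma card_subsetD2 (T : finType) (A S : {set T}) a b :
  a \in S -> b \in S -> a != b -> A \subset S :\ a :\ b -> (#|A| + 2 <= #|S|)%N.
Proof.
move=> aS bS ab /subset_leq_card.
have bSa : b \in S :\ a by rewrite in_setD1 eq_sym ab.
by rewrite (cardsD1 a S) aS (cardsD1 b (S :\ a)) bSa; lia.
Qed.

Lemma exists_subset_card (T : finType) (A : {set T}) n :
  (n <= #|A|)%N -> exists2 S : {set T}, S \subset A & #|S| = n.
Proof.
case/card_geqP=> s [s_uniq <- sA]; exists [set w in s].
  by apply/subsetP=> w; rewrite inE => /sA.
by rewrite cardsE; apply/card_uniqP.
Qed.

Lemma k_sees_int_adj k (V : finType) (B : bars V) u v :
  k_sees k B u v -> int_adj B u v.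
Proof. by case=> uv [x [ou ov _]]; split=> //; exists x. Qed.

Section Stack.
Variables (V : finType) (B : bars V) (x lo hi : Defs.coord).

Definition stack : {set V} := [set w | on_bar B w x && (lo <= by_ B w <= hi)].

Lemma on_bar_stack w : w \in stack -> on_bar B w x.
Proof. by rewrite inE => /andP[]. Qed.

Lemma stack_int_adj u w : u \in stack -> w \in stack -> u != w -> int_adj B u w.
Proof. by move=> /on_bar_stack ou /on_bar_stack ow uw; split=> //; exists x. Qed.

Definition down_closed (S : {set V}) : Prop :=
  S \subset stack /\
  {in stack & S, forall w a, by_ B w <= by_ B a -> w \in S}.

Hypothesis wf : bars_wf B.

Lemma stack_by_inj : {in stack &, injective (by_ B)}.
Proof.
move=> a b /on_bar_stack/andP[la ra] /on_bar_stack/andP[lb rb] eq_ab.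
apply/eqP; apply: contraT => ab.
by case: wf => _ /(_ a b ab eq_ab) []; lra.
Qed.

(* The n lowest bars of the stack, built by adding the lowest remaining one. *)
Lemma exists_down_closed n :
  (n <= #|stack|)%N -> exists2 S, down_closed S & #|S| = n.
Proof.
elim: n => [|n IH] n_le.
  by exists set0; [split=> [|w a _]; rewrite ?sub0set ?inE | rewrite cards0].
have [S [S_sub S_down] cardS] := IH (ltnW n_le).
have [m0 m0_out] : exists m0, m0 \in stack :\: S.
  apply/card_gt0P; rewrite cardsDS // cardS; lia.
case: (arg_minP (by_ B) m0_out) => m /setDP[m_st mS] m_min.
exists (m |: S); last by rewrite cardsU1 mS cardS.
split; first by rewrite subUset sub1set m_st S_sub.
move=> w a w_st /setU1P[-> | aS] le_wa; last by rewrite setU1r ?(S_down w a).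
rewrite in_setU1; case: (boolP (w \in S)) => wS; first by rewrite orbT.
have le_mw : by_ B m <= by_ B w by apply: m_min; apply/setDP.
by rewrite (stack_by_inj w_st m_st) ?eqxx //; apply/eqP; rewrite eq_le le_wa.
Qed.

End Stack.

Section Sightline.
Variables (V : finType) (B : bars V) (x : Defs.coord).

Let lo u v := Num.min (by_ B u) (by_ B v).
Let hi u v := Num.max (by_ B u) (by_ B v).

Lemma blockers_subset_stack u v : on_bar B u x -> on_bar B v x ->
  blockers B u v x \subset stack B x (lo u v) (hi u v) :\ u :\ v.
Proof. by move=> ou ov; apply/subsetP=> w; rewrite !inE => /and5P[-> -> -> -> ->]. Qed.

Lemma card_blockers_stack u v : on_bar B u x -> on_bar B v x -> u != v ->
  (#|blockers B u v x| + 2 <= #|stack B x (lo u v) (hi u v)|)%N.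
Proof.
move=> ou ov uv; apply: card_subsetD2 uv (blockers_subset_stack ou ov).
  by rewrite inE ou /lo /hi ge_min le_max !lexx.
by rewrite inE ov /lo /hi ge_min le_max !lexx !orbT.
Qed.

Lemma card_blockers_down_closed lo' hi' S a b :
  down_closed B x lo' hi' S -> a \in S -> b \in S -> a != b ->
  (#|blockers B a b x| + 2 <= #|S|)%N.
Proof.
move=> [S_sub S_down] aS bS ab; apply: card_subsetD2 ab _ => //.
apply/subsetP=> w; rewrite inE => /and5P[wa wb ow lo_w w_hi].
rewrite !inE wa wb /=.
have a_st := subsetP S_sub a aS; have b_st := subsetP S_sub b bS.
have w_st : w \in stack B x lo' hi'.
  move: a_st b_st; rewrite !inE ow => /andP[_ /andP[la ha]] /andP[_ /andP[lb hb]].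
  by move: lo_w w_hi; rewrite ge_min le_max => /orP[] ? /orP[] ?; apply/andP; split; lra.
by move: w_hi; rewrite le_max => /orP[] /S_down; apply.
Qed.

End Sightline.

Section Equivalence.
Variables (k l : nat) (V : finType) (e : rel V) (B : bars V).
Hypotheses (l_le : (l <= k + 2)%N) (e_free : K_free l e).

Lemma int_adj_k_sees_of_interval : (forall u v, e u v <-> int_adj B u v) ->
  forall u v, int_adj B u v -> k_sees k B u v.
Proof.
move=> eB u v [uv [x [ou ov]]]; split=> //; exists x; split=> //.
rewrite leqNgt; apply/negP=> k_lt.
have /exists_subset_card[S S_sub cardS] :
    (l <= #|stack B x (Num.min (by_ B u) (by_ B v)) (Num.max (by_ B u) (by_ B v))|)%N.
  by have := card_blockers_stack ou ov uv; lia.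
apply: e_free; exists S; split=> // a b aS bS ab.
by apply/eB; apply: stack_int_adj ab; apply: (subsetP S_sub).
Qed.

Lemma int_adj_k_sees_of_visibility : bars_wf B ->
  (forall u v, e u v <-> k_sees k B u v) ->
  forall u v, int_adj B u v -> k_sees k B u v.
Proof.
move=> wf eB u v [uv [x [ou ov]]]; split=> //; exists x; split=> //.
rewrite leqNgt; apply/negP=> k_lt.
have /(exists_down_closed wf)[S S_down cardS] :
    (l <= #|stack B x (Num.min (by_ B u) (by_ B v)) (Num.max (by_ B u) (by_ B v))|)%N.
  by have := card_blockers_stack ou ov uv; lia.
apply: e_free; exists S; split=> // a b aS bS ab.
apply/eB; split=> //; exists x; have [S_sub _] := S_down.
split; [exact: on_bar_stack (subsetP S_sub a aS) | exact: on_bar_stack (subsetP S_sub b bS) |].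
have := card_blockers_down_closed S_down aS bS ab; lia.
Qed.

End Equivalence.

Theorem mainTheorem11 (k : nat) (V : finType) (e : rel V) :
  simple_graph e ->
  (exists l : nat, (l <= k + 2)%N /\ K_free l e) ->
  (is_interval_graph e <-> is_bar_k_visibility_graph k e).
Proof.
move=> _ [l [l_le e_free]]; split=> -[B [wf eB]]; exists B; split=> // u v.
- rewrite eB; split; last exact: k_sees_int_adj.
  exact: int_adj_k_sees_of_interval l_le e_free eB u v.
- rewrite eB; split; first exact: k_sees_int_adj.
  exact: int_adj_k_sees_of_visibility l_le e_free wf eB u v.
Qed.
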